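(* Let $\mathrm y^\star\in\mathbb R^{d|\mathbb V|}$. There exist controllers $\{\Pi_e\}_{e\in\mathbb E}$, each output-strictly MEICMP, such that the closed-loop network $(\Sigma,\Pi,\mathcal G)$ has a steady state $(\mathrm u,\mathrm y^\star,\zeta,\mu)$ for some $\mathrm u,\zeta,\mu$, if and only if $k^{-1}(\mathrm y^\star)\cap\mathrm{IM}(\mathcal E)\ne\emptyset$.
   Context: Graph and network: $\mathcal G=(\mathbb V,\mathbb E)$ finite graph with arbitrarily oriented edges, incidence matrix $E$ ($E_{ik}=-1$, $E_{jk}=1$ for edge $k=(i,j)$, other entries of column $k$ zero), $d\ge1$, $\mathcal E=E\otimes I_d$, $\mathrm{IM}(\mathcal E)$ its image. Agents $\Sigma_i$: $\dot x_i=f_i(x_i,u_i,\mathrm w_i)$, $y_i=h_i(x_i,u_i,\mathrm w_i)$, $u_i,y_i\in\mathbb R^d$, $\mathrm w_i$ fixed constants, assumed MEICMP; controllers $\Pi_e$: $\dot\eta_e=\phi_e(\eta_e,\zeta_e)$, $\mu_e=\psi_e(\eta_e,\zeta_e)$; closed loop: $\zeta=\mathcal E^Ty$, $u=-\mathcal E\mu$. Steady-state relations $k_i=\{(\mathrm u_i,\mathrm y_i):\exists\mathrm x_i,\ f_i(\mathrm x_i,\mathrm u_i,\mathrm w_i)=0,\ \mathrm y_i=h_i(\mathrm x_i,\mathrm u_i,\mathrm w_i)\}$, $\gamma_e=\{(\zeta_e,\mu_e):\exists\eta_e,\ \phi_e(\eta_e,\zeta_e)=0,\ \mu_e=\psi_e(\eta_e,\zeta_e)\}$;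 $k$ the stacked relation and $k^{-1}(\mathrm y)=\{\mathrm u:(\mathrm u,\mathrm y)\in k\}$. A 4-tuple of constants $(\mathrm u,\mathrm y,\zeta,\mu)$ is a steady state of the closed loop if there are constant $\mathrm x_i,\eta_e$ with $f_i(\mathrm x_i,\mathrm u_i,\mathrm w_i)=0$, $\mathrm y_i=h_i(\mathrm x_i,\mathrm u_i,\mathrm w_i)$, $\phi_e(\eta_e,\zeta_e)=0$, $\mu_e=\psi_e(\eta_e,\zeta_e)$, $\zeta=\mathcal E^T\mathrm y$, $\mathrm u=-\mathcal E\mu$. A relation $R\subseteq\mathbb R^d\times\mathbb R^d$ is cyclically monotone (CM) if $\sum_{i=1}^N y_i^T(u_i-u_{i-1})\ge0$ for all $N\ge1$, $(u_1,y_1),\dots,(u_N,y_N)\in R$, $u_0=u_N$; maximal CM if not strictly contained in a larger CM relation. A system with input $u$, output $y$, state $x$ is (output-strictly) passive w.r.t. a steady-state pair $(\mathrm u,\mathrm y)$ if there is a storage $S(x)\ge0$ and $\rho\ge0$ ($\rho>0$ for output-strict) with $S(x(t_1))-S(x(t_0))\le\int_{t_0}^{t_1}[-\rho\|y-\mathrm y\|^2+(y-\mathrm y)^T(u-\mathrm u)]dt$ along trajectories. A system is (output-strictly) MEICMP if it is (output-strictly) passive w.r.t. every steady-state pair and its steady-state relation is maximal CM. *)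

From Stdlib Require Import Reals.
From mathcomp Require Import all_boot.

Set Implicit Arguments.
Unset Strict Implicit.
Unset Printing Implicit Defensive.
Local Open Scope R_scope.

Definition vec (n : nat) := 'I_n -> R.

Definition vzero {n} : vec n := fun _ => 0.
Definition vadd {n} (x y : vec n) : vec n := fun i => (x i + y i).
Definition vsub {n} (x y : vec n) : vec n := fun i => (x i - y i).
Definition vopp {n} (x : vec n) : vec n := fun i => (- x i).
Definition vscale {n} (a : R) (x : vec n) : vec n := fun i => (a * x i).
Definition dot {n} (x y : vec n) : R := \big[Rplus/0]_(i < n) (x i * y i).
Definition norm2 {n} (x : vec n) : R := dot x x.

(* A (possibly static-feedthrough) input-affine-free system with state in R^nx,
   input and output in R^d:  xdot = f(x,u), y = h(x,u).  Fixed constant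
   parameters w_i are absorbed into f and h. *)
Record sys (nx d : nat) := Sys {
  sys_f : vec nx -> vec d -> vec nx;
  sys_h : vec nx -> vec d -> vec d
}.

Definition ss_rel {nx d} (S : sys nx d) (u y : vec d) : Prop :=
  exists x : vec nx, sys_f S x u = vzero /\ y = sys_h S x u.

Definition is_traj {nx d} (S : sys nx d) (x : R -> vec nx) (u : R -> vec d)
    (t0 t1 : R) : Prop :=
  forall t, (t0 <= t <= t1) ->
    forall j : 'I_nx, derivable_pt_lim (fun s => x s j) t (sys_f S (x t) (u t) j).

Definition supply {nx d} (S : sys nx d) (rho : R) (ub yb : vec d)
    (x : R -> vec nx) (u : R -> vec d) (t : R) : R :=
  (- rho * norm2 (vsub (sys_h S (x t) (u t)) yb)
   + dot (vsub (sys_h S (x t) (u t)) yb) (vsub (u t) ub)).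

Definition dissipative {nx d} (S : sys nx d) (rho : R) (ub yb : vec d)
    (St : vec nx -> R) : Prop :=
  (forall x, 0 <= St x) /\
  forall (t0 t1 : R) (x : R -> vec nx) (u : R -> vec d),
    (t0 <= t1) -> is_traj S x u t0 t1 ->
    forall pr : Riemann_integrable (supply S rho ub yb x u) t0 t1,
      (St (x t1) - St (x t0) <= RiemannInt pr).

Definition passive_wrt {nx d} (S : sys nx d) (ub yb : vec d) : Prop :=
  exists (St : vec nx -> R) (rho : R), (0 <= rho) /\ dissipative S rho ub yb St.

Definition os_passive_wrt {nx d} (S : sys nx d) (ub yb : vec d) : Prop :=
  exists (St : vec nx -> R) (rho : R), (0 < rho) /\ dissipative S rho ub yb St.

(* Cyclic monotonicity of a relation on R^d x R^d.  A cycle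
   (u_1,y_1),...,(u_N,y_N) is given by p : nat -> vec d * vec d on indices
   1..N, with u_0 = u_N. *)
Definition cyc_prev (N i : nat) : nat := if i == 1%N then N else i.-1.

Definition CM {d} (Rel : vec d -> vec d -> Prop) : Prop :=
  forall (N : nat) (p : nat -> vec d * vec d),
    (1 <= N)%N ->
    (forall i, (1 <= i <= N)%N -> Rel (p i).1 (p i).2) ->
    (0 <= \big[Rplus/0]_(1 <= i < N.+1)
            dot (p i).2 (vsub (p i).1 (p (cyc_prev N i)).1)).

Definition maximal_CM {d} (Rel : vec d -> vec d -> Prop) : Prop :=
  CM Rel /\
  forall Rel' : vec d -> vec d -> Prop,
    CM Rel' -> (forall u y, Rel u y -> Rel' u y) -> (forall u y, Rel' u y -> Rel u y).

Definition MEICMP {nx d} (S : sys nx d) : Prop :=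
  (forall ub yb, ss_rel S ub yb -> passive_wrt S ub yb) /\ maximal_CM (ss_rel S).

Definition os_MEICMP {nx d} (S : sys nx d) : Prop :=
  (forall ub yb, ss_rel S ub yb -> os_passive_wrt S ub yb) /\ maximal_CM (ss_rel S).

Definition incidence {n m} (tl hd : 'I_m -> 'I_n) (i : 'I_n) (k : 'I_m) : R :=
  ((if i == hd k then 1 else 0) - (if i == tl k then 1 else 0)).

Definition svec (n d : nat) := 'I_n -> vec d.

(* (E (x) I_d) mu  and  (E (x) I_d)^T y. *)
Definition calE {n m d} (tl hd : 'I_m -> 'I_n) (mu : svec m d) : svec n d :=
  fun i j => \big[Rplus/0]_(k < m) (incidence tl hd i k * mu k j).
Definition calET {n m d} (tl hd : 'I_m -> 'I_n) (y : svec n d) : svec m d :=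
  fun k j => \big[Rplus/0]_(i < n) (incidence tl hd i k * y i j).

Definition cl_steady_state {n m d} (tl hd : 'I_m -> 'I_n)
    (nx : 'I_n -> nat) (Sigma : forall i, sys (nx i) d)
    (neta : 'I_m -> nat) (Pi : forall e, sys (neta e) d)
    (u y : svec n d) (zeta mu : svec m d) : Prop :=
  (forall i, exists x : vec (nx i),
      sys_f (Sigma i) x (u i) = vzero /\ y i = sys_h (Sigma i) x (u i)) /\
  (forall e, exists eta : vec (neta e),
      sys_f (Pi e) eta (zeta e) = vzero /\ mu e = sys_h (Pi e) eta (zeta e)) /\
  zeta = calET tl hd y /\
  u = (fun i => vopp (calE tl hd mu i)).

(* Sufficiency: a controller with no state and constant output c has steady-state
   relation R^d x {c}, the subdifferential of the linear map zeta |-> c^T zeta, so it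
   is maximal cyclically monotone; its supply rate vanishes identically, so it is
   output-strictly passive with zero storage.  Choosing c_e = -mu_e for the edge
   vector mu with u = E mu makes (u, y*, E^T y*, -mu) a closed-loop steady state.
   Necessity: any closed-loop steady state has u = -E mu = E(-mu). *)

From Stdlib Require Import Reals Lra FunctionalExtensionality PropExtensionality.
From mathcomp Require Import all_boot.
From HB Require Import structures.

Set Implicit Arguments.
Unset Strict Implicit.
Unset Printing Implicit Defensive.

Local Open Scope R_scope.

HB.instance Definition _ := Monoid.isComLaw.Build R 0 Rplus
  (fun a b c => esym (Rplus_assoc a b c)) Rplus_comm Rplus_0_l.

Lemma big_Ropp (I : Type) (r : seq I) (F : I -> R) :
  \big[Rplus/0]_(i <- r) - F i = - \big[Rplus/0]_(i <- r) F i.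
Proof. by rewrite (big_morph Ropp (id1 := 0) (op1 := Rplus)) //; [move=> x y | ]; lra. Qed.

Lemma big_Rminus (I : Type) (r : seq I) (F G : I -> R) :
  \big[Rplus/0]_(i <- r) (F i - G i) =
  \big[Rplus/0]_(i <- r) F i - \big[Rplus/0]_(i <- r) G i.
Proof. by rewrite /Rminus big_split /= big_Ropp. Qed.

Lemma dot_vsubr n (c a b : vec n) : dot c (vsub a b) = dot c a - dot c b.
Proof. by rewrite /dot -big_Rminus; apply: eq_bigr => i _; rewrite /vsub; ring. Qed.

Lemma norm2_le0 n (x : vec n) : norm2 x <= 0 -> x = vzero.
Proof.
move=> hx; apply: functional_extensionality => j.
have sq_ge0 (i : 'I_n) : 0 <= x i * x i by apply: Rle_0_sqr.
move: hx; rewrite /norm2 /dot (bigD1 j) //=.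
have : 0 <= \big[Rplus/0]_(i < n | i != j) (x i * x i).
  by apply: big_ind => [|a b|i _]; [lra | lra | exact: sq_ge0].
move: (bigop.body _ _ _) => rest rest_ge0 hx.
have /Rmult_integral : x j * x j = 0 by have := sq_ge0 j; lra.
by case.
Qed.

Lemma cyc_prev_telescope (N : nat) (g : nat -> R) : (1 <= N)%N ->
  \big[Rplus/0]_(1 <= i < N.+1) (g i - g (cyc_prev N i)) = 0.
Proof.
move=> hN; rewrite big_Rminus (big_nat_recr N 1 g) //.
rewrite (big_ltn (F := fun i => g (cyc_prev N i))) //.
have -> : \big[Rplus/0]_(2 <= i < N.+1) g (cyc_prev N i) = \big[Rplus/0]_(1 <= i < N) g i.
  by rewrite big_add1; apply: eq_big_nat => -[|i].
by rewrite /cyc_prev /=; lra.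
Qed.

Lemma CM_two_cycle d (Rel : vec d -> vec d -> Prop) u1 y1 u2 y2 :
  CM Rel -> Rel u1 y1 -> Rel u2 y2 ->
  0 <= dot y1 (vsub u1 u2) + dot y2 (vsub u2 u1).
Proof.
move=> hCM h1 h2.
pose p (i : nat) := if i == 1%N then (u1, y1) else (u2, y2).
have := hCM 2%N p isT; rewrite big_ltn // big_ltn // big_geq //= Rplus_0_r.
by apply=> i _; rewrite /p; case: ifP.
Qed.

Section ConstantOutput.
Variables (d : nat) (c : vec d).

Definition const_rel (u y : vec d) : Prop := y = c.

Lemma const_rel_CM : CM const_rel.
Proof.
move=> N p hN hp; rewrite big_nat_cond.
rewrite (eq_bigr (fun i => dot c (p i).1 - dot c (p (cyc_prev N i)).1)).
  by rewrite -big_nat_cond cyc_prev_telescope //; lra.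
by move=> i /andP [hi _]; rewrite -dot_vsubr (hp i hi).
Qed.

(* Any CM extension containing (u, y) also contains (u + (y - c), c); the
   two-cycle through these points has cost -|y - c|^2. *)
Lemma const_rel_maximal_CM : maximal_CM const_rel.
Proof.
split; first exact: const_rel_CM.
move=> Rel' hCM hsub u y hR.
pose v := vadd u (vsub y c).
have := CM_two_cycle hCM hR (hsub v c erefl).
have -> : dot y (vsub u v) + dot c (vsub v u) = - norm2 (vsub y c).
  rewrite /norm2 /dot -big_split -big_Ropp; apply: eq_bigr => i _.
  by rewrite /= /v /vadd /vsub; ring.
move=> hneg; have hyc : vsub y c = vzero by apply: norm2_le0; lra.
apply: functional_extensionality => j.
by have := congr1 (fun x => x j) hyc; rewrite /vsub /vzero /=; lra.
Qed.

Definition const_sys : sys 0 d := Sys (fun _ _ => vzero) (fun _ _ => c).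

Lemma ss_rel_const_sys u y : ss_rel const_sys u y <-> const_rel u y.
Proof. by split=> [[x [_ ->]] | ->]; last exists vzero. Qed.

Lemma const_sys_os_passive ub : os_passive_wrt const_sys ub c.
Proof.
exists (fun _ => 0), 1; split; first lra.
split=> [_ | t0 t1 x u h01 _ pr]; first lra.
have supply0 t : supply const_sys 1 ub c x u t = 0.
  by rewrite /supply /norm2 /dot /vsub /= !big1 => [|i _|i _]; lra.
have := RiemannInt_const_bound pr h01 (l := 0) (u := 0).
by case=> [t _ | lb _]; [rewrite supply0 | ]; lra.
Qed.

Lemma const_sys_os_MEICMP : os_MEICMP const_sys.
Proof.
split; last first.
  have <- : const_rel = ss_rel const_sys.
    by apply: functional_extensionality => u; apply: functional_extensionality => y;
       apply: propositional_extensionality; rewrite ss_rel_const_sys.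
  exact: const_rel_maximal_CM.
by move=> ub yb /ss_rel_const_sys ->; apply: const_sys_os_passive.
Qed.

End ConstantOutput.

Lemma calE_vopp n m d (tl hd : 'I_m -> 'I_n) (mu : svec m d) :
  calE tl hd (fun e => vopp (mu e)) = (fun i => vopp (calE tl hd mu i)).
Proof.
apply: functional_extensionality => i; apply: functional_extensionality => j.
by rewrite /calE /vopp -big_Ropp; apply: eq_bigr => k _; ring.
Qed.

Lemma vopp_vopp n (x : vec n) : vopp (vopp x) = x.
Proof. by apply: functional_extensionality => j; rewrite /vopp Ropp_involutive. Qed.

Theorem mainTheorem6 (n m d : nat) (hd1 : (1 <= d)%N)
    (tl hd : 'I_m -> 'I_n)
    (nx : 'I_n -> nat) (Sigma : forall i, sys (nx i) d)
    (hSigma : forall i, MEICMP (Sigma i))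
    (ystar : svec n d) :
  (exists (neta : 'I_m -> nat) (Pi : forall e, sys (neta e) d),
      (forall e, os_MEICMP (Pi e)) /\
      exists (u : svec n d) (zeta mu : svec m d),
        cl_steady_state tl hd Sigma Pi u ystar zeta mu)
  <->
  (exists u : svec n d,
      (forall i, ss_rel (Sigma i) (u i) (ystar i)) /\
      exists mu : svec m d, u = calE tl hd mu).
Proof.
split.
- case=> neta [Pi [_ [u [zeta [mu [hS [_ [_ hu]]]]]]]].
  by exists u; split=> //; exists (fun e => vopp (mu e)); rewrite calE_vopp.
- case=> u [hS [mu hu]].
  exists (fun _ => 0%N), (fun e => const_sys (vopp (mu e))).
  split=> [e | ]; first exact: const_sys_os_MEICMP.
  exists u, (calET tl hd ystar), (fun e => vopp (mu e)).
  split; first exact: hS.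
  split; first by move=> e; exists vzero.
  split=> //; rewrite calE_vopp hu; apply: functional_extensionality => i.
  by rewrite /= vopp_vopp.
Qed.
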